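(* Let $n\geq 4$ and let $F_n=\{0,a_1,\ldots,a_{n-2},1\}$ be the meet-semilattice of order $n$ with least element $0$, greatest element $1$, and $a_1,\ldots,a_{n-2}$ pairwise incomparable. Write $a_0=0$ and $a_{n-1}=1$. Then for each $i\in\{1,\ldots,n-2\}$, \[ \mathrm{cov}_1(a_i)=\{xa_j=xa_k\mid j,k\in\{0,1,\ldots,n-2\}\setminus\{i\}\}\cup\{xa_j=xa_k\mid j,k\in\{i,n-1\}\}, \] and $|\mathrm{cov}_1(a_i)|=(n-2)^2+4$.
   Context: The meet is written as multiplication. An equation of the first kind in one variable $x$ over a semilattice $S$ is a formal expression $xa=xa'$ with $a,a'\in S$; formally it is the ordered pair $(a,a')$. An element $s$ satisfies $xa=xa'$ if $sa=sa'$. $\mathrm{cov}_1(s)$ is the set of equations of this form satisfied by $s$. *)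

From mathcomp Require Import all_boot.
Set Implicit Arguments. Unset Strict Implicit. Unset Printing Implicit Defensive.

(* The meet-semilattice F_n = {0, a_1, ..., a_{n-2}, 1} is represented on the
   carrier 'I_n: the ordinal j stands for a_j, with a_0 = 0 (least element),
   a_{n-1} = 1 (greatest element), and a_1, ..., a_{n-2} pairwise incomparable. *)

Definition Fn_le (n : nat) (x y : 'I_n) : bool :=
  [|| x == y, val x == 0 | val y == n.-1].

Definition Fn_meet (n : nat) (x y : 'I_n) : 'I_n :=
  if x == y then x
  else if val x == n.-1 then y
  else if val y == n.-1 then x
  else if val x == 0 then x
  else if val y == 0 then y
  else [arg min_(z < x) val z]. (* = a_0 = 0, the only common lower bound *)

(* An equation of the first kind x a = x a' is the ordered pair (a, a');
   cov_1(s) is the set of such equations satisfied by s. *)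
Definition cov1 (n : nat) (s : 'I_n) : {set 'I_n * 'I_n} :=
  [set e : 'I_n * 'I_n | Fn_meet s e.1 == Fn_meet s e.2].

(* A middle element s of F_n meets every element into {0, s}: s e = s when
   s <= e, i.e. e is s or 1, and s e = 0 otherwise.  Hence s satisfies
   x a = x a' exactly when s <= a and s <= a' agree, so cov_1(s) is the kernel
   of the indicator of the up-set {s, 1}, a union of two squares of sizes 2 and
   n - 2. *)

From mathcomp Require Import all_boot.
From mathcomp Require Import zify.

Section KernelOfPredicate.
Variables (T : finType) (p : pred T).

Let A := [set x | p x].

Lemma kernel_predE :
  [set e : T * T | p e.1 == p e.2] = setX A A :|: setX (~: A) (~: A).
Proof.
by apply/setP => -[a b]; rewrite !inE /=; case: (p a); case: (p b).
Qed.

Lemma card_kernel_pred :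
  #|[set e : T * T | p e.1 == p e.2]| = #|A| ^ 2 + #|~: A| ^ 2.
Proof.
have disjoint_squares : setX A A :&: setX (~: A) (~: A) = set0.
  by apply/setP => -[a b]; rewrite !inE /=; case: (p a); rewrite ?andbF.
by rewrite kernel_predE cardsU disjoint_squares cards0 subn0 !cardsX.
Qed.

End KernelOfPredicate.

Section MiddleElement.
Variables (n : nat) (s : 'I_n).
Hypothesis s_mid : 0 < val s < n.-1.

Let s_neq0 : (val s == 0) = false. Proof. by apply/negbTE; lia. Qed.
Let s_neq_top : (val s == n.-1) = false. Proof. by apply/negbTE; lia. Qed.

Lemma Fn_le_midE (e : 'I_n) : Fn_le s e = (e == s) || (val e == n.-1).
Proof. by rewrite /Fn_le eq_sym s_neq0. Qed.

Lemma Fn_meet_mid (e : 'I_n) :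
  val (Fn_meet s e) = if Fn_le s e then val s else 0.
Proof.
rewrite Fn_le_midE /Fn_meet eq_sym.
have [-> // | ne_es] := eqVneq e s.
rewrite s_neq_top; case: ifP => // _.
rewrite s_neq0; case: ifP => [/eqP // | _].
case: arg_minnP => // m _ m_min.
have bot_lt : 0 < n by lia.
by have := m_min (Ordinal bot_lt) isT; rewrite /=; lia.
Qed.

Lemma cov1_mid : cov1 s = [set e : 'I_n * 'I_n | Fn_le s e.1 == Fn_le s e.2].
Proof.
apply/setP => e; rewrite !inE -val_eqE !Fn_meet_mid.
by case: (Fn_le s e.1); case: (Fn_le s e.2); rewrite /= ?eqxx // ?s_neq0 // eq_sym s_neq0.
Qed.

Lemma card_Fn_up_mid : #|[set e | Fn_le s e]| = 2.
Proof.
have top_lt : n.-1 < n by lia.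
have -> : [set e | Fn_le s e] = [set s; Ordinal top_lt].
  by apply/setP => e; rewrite !inE Fn_le_midE -val_eqE.
by rewrite cards2 -val_eqE /= s_neq_top.
Qed.

Lemma card_cov1_mid : #|cov1 s| = (n - 2) ^ 2 + 4.
Proof.
have := cardsC [set e | Fn_le s e].
rewrite cov1_mid card_kernel_pred card_Fn_up_mid card_ord => card_split.
have -> : #|~: [set e | Fn_le s e]| = n - 2 by lia.
by rewrite addnC.
Qed.

End MiddleElement.

Theorem lemma4 (n : nat) (hn : 4 <= n) (i : 'I_n) (hi : 1 <= val i <= n - 2) :
  cov1 i =
    [set e : 'I_n * 'I_n |
       ((val e.1 <= n - 2) && (e.1 != i) && (val e.2 <= n - 2) && (e.2 != i))
       || (((e.1 == i) || (val e.1 == n - 1)) && ((e.2 == i) || (val e.2 == n - 1)))]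
  /\ #|cov1 i| = (n - 2) ^ 2 + 4.
Proof.
have i_mid : 0 < val i < n.-1 by lia.
split; last exact: card_cov1_mid.
rewrite cov1_mid //; apply/setP => -[a b]; rewrite !inE !Fn_le_midE //=.
have := ltn_ord a; have := ltn_ord b.
by case: (a == i); case: (b == i); rewrite /=; lia.
Qed.
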